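(* Let $X=\mathbb{CP}^2\#n\overline{\mathbb{CP}}^2$ and $k\ge1$. The set of minimal elements of $U_5=\{A\in H_2(X;\mathbb{Z}):\mathrm{ind}(A)\ge2k,\ A\cdot H>0\}$ with respect to the preorder $\ge$ is finite.
   Context: $K_0=-3H+E_1+\cdots+E_n$, $\mathrm{ind}(A):=A^2-K_0\cdot A$. With $H^2(X;\mathbb{R})\cong\mathbb{R}^{n+1}$ via $(x_0,\dots,x_n)\leftrightarrow x_0PD(H)-\sum x_iPD(E_i)$, the reduced cone $\mathcal{P}$ is: $0<x_1<x_0$ ($n=1$); $0<x_2\le x_1$, $x_1+x_2<x_0$ ($n=2$); $0<x_n\le\cdots\le x_1$, $x_1+x_2+x_3\le x_0$, $\sum x_i^2<x_0^2$ ($n\ge3$); $\mathcal{P}^{c_1>0}=\{[\omega]\in\mathcal{P}:\omega(3H-\sum E_i)>0\}$. For $A,B\in U_5$, $A\ge B$ means $\omega(A)\ge\omega(B)$ for all $[\omega]\in\mathcal{P}^{c_1>0}$; $A$ is minimal if no other $B\in U_5$ satisfies $A\ge B$. *)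

From HB Require Import structures.
From mathcomp Require Import all_boot all_order all_algebra.
From mathcomp Require Import reals.
Set Implicit Arguments. Unset Strict Implicit. Unset Printing Implicit Defensive.
Import Order.TTheory GRing.Theory Num.Theory.
Local Open Scope ring_scope.

(* X = CP^2 # n \bar{CP^2}.  A class A in H_2(X;Z) is written A = a H - sum_i b_i E_i,
   encoded as the pair (a, b) with b : {ffun 'I_n -> int}; E_{i+1} <-> index i. *)
Definition H2 (n : nat) := (int * {ffun 'I_n -> int})%type.

Definition classH (n : nat) : H2 n := (1, [ffun => 0]).

(* K_0 = -3H + E_1 + ... + E_n, i.e. a = -3, b_i = -1. *)
Definition K0 (n : nat) : H2 n := (-3, [ffun => -1]).

(* intersection form: H.H = 1, E_i.E_j = -delta_ij, H.E_i = 0 *)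
Definition dotH2 (n : nat) (A B : H2 n) : int :=
  A.1 * B.1 - \sum_(i < n) A.2 i * B.2 i.

Definition ind (n : nat) (A : H2 n) : int := dotH2 A A - dotH2 (K0 n) A.

Definition U5 (n k : nat) (A : H2 n) : Prop :=
  (2 * k)%:Z <= ind A /\ 0 < dotH2 A (classH n).

(* Cohomology class x_0 PD(H) - sum x_i PD(E_i), encoded as (x_0, x) with
   x : 'I_n -> R (x_{i+1} <-> x i).  Its value on A = aH - sum b_i E_i is
   x_0 a - sum x_i b_i. *)
Definition pairing (R : realType) (n : nat) (x0 : R) (x : 'I_n -> R) (A : H2 n) : R :=
  x0 * A.1%:~R - \sum_(i < n) x i * (A.2 i)%:~R.

(* 0-based accessor: xk x k = x_{k+1} (0 outside the range) *)
Definition xk (R : realType) (n : nat) (x : 'I_n -> R) (k : nat) : R :=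
  if insub k is Some i then x i else 0.

Definition reduced_cone (R : realType) (n : nat) (x0 : R) (x : 'I_n -> R) : Prop :=
  match n with
  | 0 => False
  | 1 => 0 < xk x 0 /\ xk x 0 < x0
  | 2 => 0 < xk x 1 /\ xk x 1 <= xk x 0 /\ xk x 0 + xk x 1 < x0
  | _ => (forall i : 'I_n, 0 < x i)
         /\ (forall i j : 'I_n, (i <= j)%N -> x j <= x i)
         /\ xk x 0 + xk x 1 + xk x 2 <= x0
         /\ \sum_(i < n) x i ^+ 2 < x0 ^+ 2
  end.

Definition c1class (n : nat) : H2 n := (3, [ffun => 1]).

Definition cone_c1pos (R : realType) (n : nat) (x0 : R) (x : 'I_n -> R) : Prop :=
  reduced_cone x0 x /\ 0 < pairing x0 x (c1class n).

Definition geq_cls (R : realType) (n : nat) (A B : H2 n) : Prop :=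
  forall (x0 : R) (x : 'I_n -> R), cone_c1pos x0 x -> pairing x0 x B <= pairing x0 x A.

Definition minimal_U5 (R : realType) (n k : nat) (A : H2 n) : Prop :=
  U5 k A /\ forall B : H2 n, U5 k B -> B <> A -> ~ geq_cls R A B.

(* Write A = aH - sum_i b_i E_i, so that ind(A) = a^2 + 3a - sum_i (b_i^2 + b_i).
   If A is minimal and D is a class with omega(D) >= 0 on the whole cone
   P^{c_1>0}, then A - D is not in U_5 whenever it is a different class with
   positive H-coefficient ("descent"), so ind(A - D) < 2k <= ind(A).
   Descending along E_i and E_i - E_j shows that the b_i of a minimal class are
   nonnegative and non-increasing.  Descending along H - E_1 - E_2 - E_3 and
   along 3H - sum_i E_i (which is c_1) gives two more inequalities; together
   with ind(A) >= 2k and elementary estimates of sum_i b_i^2 for a sorted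
   vector, they bound a by k n + 2k + 4 (lemma bound_from_moves, pure integer
   arithmetic).  Then ind(A) >= 0 bounds each b_i by a + 1, so the minimal
   classes lie in a finite box of H_2(X; Z).  The argument is uniform in n:
   for n <= 2 the missing coefficients b_2, b_3 simply count as 0. *)

From HB Require Import structures.
From mathcomp Require Import all_boot all_order all_algebra.
From mathcomp Require Import reals.
From mathcomp Require Import zify ring lra.
Set Implicit Arguments. Unset Strict Implicit. Unset Printing Implicit Defensive.
Import Order.TTheory GRing.Theory Num.Theory.
Local Open Scope ring_scope.

(* The contribution b^2 + b of one exceptional coefficient to -ind. *)
Definition phi (b : int) : int := b ^+ 2 + b.

Lemma phi_pred (b : int) : phi (b - 1) = phi b - 2 * b.
Proof. by rewrite /phi; ring. Qed.

Lemma phi_succ (b : int) : phi (b + 1) = phi b + 2 * (b + 1).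
Proof. by rewrite /phi; ring. Qed.

Definition subc (n : nat) (A D : H2 n) : H2 n :=
  (A.1 - D.1, [ffun i => A.2 i - D.2 i]).

Lemma pairing_sub (R : realType) n (x0 : R) (x : 'I_n -> R) (A D : H2 n) :
  pairing x0 x (subc A D) = pairing x0 x A - pairing x0 x D.
Proof.
rewrite /pairing /= (eq_bigr (fun i => x i * (A.2 i)%:~R - x i * (D.2 i)%:~R)).
  by rewrite sumrB rmorphB /= mulrBr; ring.
by move=> i _; rewrite ffunE rmorphB /= mulrBr.
Qed.

Lemma dot_classH n (A : H2 n) : dotH2 A (classH n) = A.1.
Proof. by rewrite /dotH2 /= mulr1 big1 ?subr0 // => i _; rewrite ffunE mulr0. Qed.

Lemma ind_phi n (A : H2 n) : ind A = A.1 ^+ 2 + 3 * A.1 - \sum_i phi (A.2 i).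
Proof.
rewrite /ind /dotH2 /K0 /phi /= big_split /=.
have -> : \sum_(i < n) [ffun=> -1] i * A.2 i = - \sum_i A.2 i.
  by rewrite -sumrN; apply: eq_bigr => i _; rewrite ffunE mulN1r.
ring.
Qed.

Lemma ind_subc_E n (A D : H2 n) : D.1 = 0 ->
  ind (subc A D) = ind A + \sum_i (phi (A.2 i) - phi (A.2 i - D.2 i)).
Proof.
move=> D0; rewrite !ind_phi.
have -> : \sum_i phi ((subc A D).2 i) = \sum_i phi (A.2 i - D.2 i).
  by apply: eq_bigr => i _; rewrite ffunE.
rewrite /= D0 subr0 sumrB; ring.
Qed.

Definition classHE n (d : int) (P : pred 'I_n) : H2 n := (d, [ffun i => (P i)%:Z]).

Lemma pairing_classHE (R : realType) n (x0 : R) (x : 'I_n -> R) d (P : pred 'I_n) :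
  pairing x0 x (classHE d P) = x0 * d%:~R - \sum_(i | P i) x i.
Proof.
rewrite /pairing /= [in RHS]big_mkcond /=; congr (_ - _); apply: eq_bigr => i _.
by rewrite ffunE; case: (P i); rewrite ?mulr1 ?mulr0.
Qed.

(* Subtracting d H - sum_{i in P} E_i lowers each b_i, i in P, by one. *)
Lemma ind_subc_classHE n (A : H2 n) d (P : pred 'I_n) :
  ind (subc A (classHE d P)) =
  (A.1 - d) ^+ 2 + 3 * (A.1 - d) - \sum_i phi (A.2 i) + 2 * \sum_(i | P i) A.2 i.
Proof.
rewrite ind_phi.
have -> : \sum_i phi ((subc A (classHE d P)).2 i) =
          \sum_i phi (A.2 i) - 2 * \sum_(i | P i) A.2 i.
  rewrite (bigID P) [in RHS](bigID P) /= mulr_sumr.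
  rewrite (eq_bigr (fun i => phi (A.2 i) - 2 * A.2 i)); last first.
    by move=> i Pi; rewrite !ffunE Pi phi_pred.
  rewrite [X in _ + X](eq_bigr (fun i => phi (A.2 i))); last first.
    by move=> i /negbTE Pi; rewrite !ffunE Pi subr0.
  by rewrite sumrB; ring.
by rewrite /=; ring.
Qed.

Definition cone_nonneg (R : realType) n (D : H2 n) : Prop :=
  forall (x0 : R) (x : 'I_n -> R), cone_c1pos x0 x -> 0 <= pairing x0 x D.

Lemma minimal_descent (R : realType) n k (A D : H2 n) :
  minimal_U5 R k A -> cone_nonneg R D -> subc A D <> A -> D.1 < A.1 ->
  ind (subc A D) < (2 * k)%:Z.
Proof.
move=> [UA Amin] Dnn AD_ne Da; rewrite ltNge; apply/negP => ind_AD.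
apply: (Amin (subc A D)) => //; first by split; rewrite // dot_classH subr_gt0.
by move=> x0 x cx; rewrite pairing_sub gerBl; apply: Dnn.
Qed.

Lemma xk_val (R : realType) n (x : 'I_n -> R) (i : 'I_n) : xk x i = x i.
Proof. by rewrite /xk; case: insubP => [j _ /val_inj -> //|]; rewrite ltn_ord. Qed.

Definition top3 (V : nmodType) n (f : 'I_n -> V) : V := \sum_(i < n | (i < 3)%N) f i.

Lemma sum_top3 (V : nmodType) m (F : 'I_m.+3 -> V) :
  \sum_(i < m.+3 | (i < 3)%N) F i =
  F ord0 + F (lift ord0 ord0) + F (lift ord0 (lift ord0 ord0)).
Proof.
by rewrite big_mkcond !big_ord_recl /= big1 ?addr0 ?addrA.
Qed.

Lemma cone_shape (R : realType) n (x0 : R) (x : 'I_n -> R) : cone_c1pos x0 x ->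
  [/\ forall i, 0 < x i, forall i j : 'I_n, (i <= j)%N -> x j <= x i
    & top3 x <= x0].
Proof.
rewrite /top3; case: n x => [|[|[|m]]] x [cone _] //.
- case: cone => x_pos x_lt_x0; split.
  + by move=> i; rewrite -xk_val; case: i => [[|?] ?].
  + by move=> i j _; rewrite (ord1 i) (ord1 j).
  + by rewrite big_mkcond big_ord1 /= -(xk_val x ord0) ltW.
- case: cone => x1_pos [x10 x01_lt_x0]; split.
  + by move=> i; rewrite -xk_val; case: i => [[|[|?]] ?] //=; apply: lt_le_trans x10.
  + by move=> i j; rewrite -!xk_val; case: i j => [[|[|?]] ?] [[|[|?]] ?].
  + by rewrite big_mkcond !big_ord_recl big_ord0 /= -(xk_val x ord0)
       -(xk_val x (lift ord0 ord0)) addr0 ltW.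
- case: cone => x_pos [x_anti [top_le _]]; split => //.
  by rewrite sum_top3 -(xk_val x ord0) -(xk_val x (lift ord0 ord0))
     -(xk_val x (lift ord0 (lift ord0 ord0))).
Qed.

Lemma cone_c1 (R : realType) n (x0 : R) (x : 'I_n -> R) : cone_c1pos x0 x ->
  \sum_i x i <= x0 * 3%:~R.
Proof.
by case=> _ /ltW; rewrite (_ : c1class n = classHE 3 predT) ?pairing_classHE ?subr_ge0.
Qed.

Definition classE n (i : 'I_n) : H2 n := (0, [ffun l => - (l == i)%:Z]).

Lemma pairing_classE (R : realType) n (x0 : R) (x : 'I_n -> R) i :
  pairing x0 x (classE i) = x i.
Proof.
rewrite /pairing /= mulr0 sub0r (bigD1 i) //= big1 => [|l /negbTE li]; last first.
  by rewrite ffunE li oppr0 mulr0.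
by rewrite ffunE eqxx addr0 mulrN1z mulrN opprK mulr1.
Qed.

Lemma ind_subc_classE n (A : H2 n) i :
  ind (subc A (classE i)) = ind A - 2 * (A.2 i + 1).
Proof.
rewrite ind_subc_E // (bigD1 i) //= big1 => [|l /negbTE li]; last first.
  by rewrite ffunE li oppr0 subr0 subrr.
by rewrite ffunE eqxx opprK phi_succ addr0; ring.
Qed.

Lemma ind_subc_swap n (A : H2 n) i j : i != j ->
  ind (subc A (subc (classE i) (classE j))) = ind A - 2 * (A.2 i + 1) + 2 * A.2 j.
Proof.
move=> ij; rewrite ind_subc_E ?subrr // (bigD1 i) //= (bigD1 j) 1?eq_sym //=.
rewrite big1 => [|l /andP[/negbTE li /negbTE lj]]; last first.
  by rewrite !ffunE li lj subrr subr0 subrr.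
have ji : (j == i) = false by rewrite eq_sym (negbTE ij).
rewrite !ffunE !eqxx ji (negbTE ij) /= /phi; ring.
Qed.

Lemma minimal_a_gt0 (R : realType) n k (A : H2 n) : minimal_U5 R k A -> 0 < A.1.
Proof. by case=> -[_]; rewrite dot_classH. Qed.

(* A minimal class has b_i >= 0: otherwise A + E_i is in U_5 and below A. *)
Lemma minimal_coef_ge0 (R : realType) n k (A : H2 n) :
  minimal_U5 R k A -> forall i, 0 <= A.2 i.
Proof.
move=> Amin i; rewrite leNgt; apply/negP => bi_neg.
suff : ind (subc A (classE i)) < (2 * k)%:Z.
  by rewrite ind_subc_classE; have := Amin.1.1; lia.
apply: (minimal_descent Amin); last exact: minimal_a_gt0 Amin.
- by move=> x0 x /cone_shape[x_pos _ _]; rewrite pairing_classE ltW.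
- by move/(congr1 (fun B : H2 n => B.2 i)); rewrite !ffunE eqxx; lia.
Qed.

(* A minimal class has b_1 >= b_2 >= ... : otherwise A + E_i - E_j is
   in U_5 and below A. *)
Lemma minimal_coef_sorted (R : realType) n k (A : H2 n) :
  minimal_U5 R k A -> forall i j : 'I_n, (i <= j)%N -> A.2 j <= A.2 i.
Proof.
move=> Amin i j le_ij; rewrite leNgt; apply/negP => bi_lt_bj.
have ij : i != j by apply: contraTneq bi_lt_bj => ->; rewrite ltxx.
suff : ind (subc A (subc (classE i) (classE j))) < (2 * k)%:Z.
  by rewrite ind_subc_swap //; have := Amin.1.1; lia.
apply: (minimal_descent Amin); last by rewrite /= subrr (minimal_a_gt0 Amin).
- move=> x0 x /cone_shape[_ x_anti _].
  by rewrite pairing_sub !pairing_classE subr_ge0 x_anti.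
- move/(congr1 (fun B : H2 n => B.2 i)); rewrite !ffunE eqxx (negbTE ij).
  by rewrite /=; lia.
Qed.

(* The third coefficient b_3, taken to be 0 when n <= 2. *)
Definition third n (b : 'I_n -> int) : int :=
  if insub 2%N : option 'I_n is Some i then b i else 0.

Lemma third_ge0 n (b : 'I_n -> int) : (forall i, 0 <= b i) -> 0 <= third b.
Proof. by rewrite /third; case: insub. Qed.

Lemma le_third n (b : 'I_n -> int) : (forall i j : 'I_n, (i <= j)%N -> b j <= b i) ->
  forall i : 'I_n, (2 <= i)%N -> b i <= third b.
Proof.
move=> b_anti i le2i; rewrite /third; case: insubP => [j _ j2|]; first by rewrite b_anti ?j2.
by rewrite (leq_ltn_trans le2i (ltn_ord i)).
Qed.

Lemma sum_sq_le (R : numDomainType) (I : finType) (P : pred I) (b : I -> R) :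
  (forall i, P i -> 0 <= b i) -> \sum_(i | P i) b i ^+ 2 <= (\sum_(i | P i) b i) ^+ 2.
Proof.
move=> b_ge0; rewrite expr2 mulr_suml; apply: ler_sum => i Pi.
by rewrite expr2 ler_wpM2l ?b_ge0 // (bigD1 i) //= lerDl sumr_ge0 // => j /andP[/b_ge0].
Qed.

Lemma third_small n (b : 'I_n -> int) : (n <= 2)%N -> third b = 0.
Proof. by move=> len2; rewrite /third insubN // -leqNgt. Qed.

Lemma top3_third m (b : 'I_m.+3 -> int) :
  top3 b = b ord0 + b (lift ord0 ord0) + third b /\
  third b = b (lift ord0 (lift ord0 ord0)).
Proof.
suff -> : third b = b (lift ord0 (lift ord0 ord0)) by rewrite /top3 sum_top3.
by rewrite /third insubT /=; congr b; apply: val_inj.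
Qed.

(* For a nonnegative sorted vector with s = b_1 + b_2 + b_3:
   3 b_3 <= s and b_1^2 + b_2^2 + b_3^2 <= s^2 - 2 b_3 s (as b_1 b_2 >= b_3^2). *)
Lemma top3_bounds n (b : 'I_n -> int) :
  (forall i, 0 <= b i) -> (forall i j : 'I_n, (i <= j)%N -> b j <= b i) ->
  3 * third b <= top3 b /\
  \sum_(i < n | (i < 3)%N) b i ^+ 2 <= top3 b ^+ 2 - 2 * third b * top3 b.
Proof.
move=> b_ge0 b_anti; have [lt2n|len2] := ltnP 2 n; last first.
  rewrite third_small // mul0r mulr0 subr0 /top3.
  by split; [rewrite sumr_ge0 | rewrite sum_sq_le].
case: n b b_ge0 b_anti lt2n => [|[|[|m]]] // b b_ge0 b_anti _.
have [-> b2_eq] := top3_third b; rewrite sum_top3 -b2_eq.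
set b0 := b ord0; set b1 := b (lift _ _); set b2 := third b.
have b2_le_b1 : b2 <= b1 by rewrite /b2 b2_eq; apply: b_anti.
have b1_le_b0 : b1 <= b0 by apply: b_anti.
have b2_ge0 : 0 <= b2 by rewrite /b2 b2_eq.
have : b2 * b2 <= b0 * b1 by apply: ler_pM; rewrite ?(le_trans b2_le_b1).
split; lia.
Qed.

Lemma squares_bound n (b : 'I_n -> int) :
  (forall i, 0 <= b i) -> (forall i j : 'I_n, (i <= j)%N -> b j <= b i) ->
  \sum_i b i ^+ 2 <=
  top3 b ^+ 2 - 2 * third b * top3 b + third b * (\sum_i b i - top3 b).
Proof.
move=> b_ge0 b_anti; pose P := fun i : 'I_n => (i < 3)%N.
rewrite (bigID P) [X in _ <= _ + _ * (X - _)](bigID P) /=.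
have -> : \sum_(i < n | P i) b i = top3 b by [].
rewrite [_ + _ - top3 b]addrC addKr lerD ?(top3_bounds b_ge0 b_anti).2 // mulr_sumr.
apply: ler_sum => i tail_i.
rewrite expr2 ler_wpM2r ?b_ge0 // le_third //; rewrite /P in tail_i; lia.
Qed.

(* With s = b_1 + b_2 + b_3, S = sum b_i, Q = sum b_i^2
   and beta = b_3: ind(A) >= 2k and the failure of the two descents along
   H - E_1 - E_2 - E_3 and 3H - sum E_i force s = a, then beta <= 2k, and
   finally a <= k N + k. *)
Lemma bound_from_moves (a s S Q beta k N : int) :
  0 <= beta -> 3 * beta <= s -> s <= S -> S <= s + N * beta -> 0 <= k -> 0 <= N ->
  Q <= s ^+ 2 - 2 * beta * s + beta * (S - s) ->
  2 * k <= a ^+ 2 + 3 * a - Q - S ->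
  (a - 1) ^+ 2 + 3 * (a - 1) - Q - S + 2 * s < 2 * k ->
  (a - 3) ^+ 2 + 3 * (a - 3) - Q - S + 2 * S < 2 * k ->
  2 * k + 4 < a -> a <= k * N + k.
Proof.
move=> beta_ge0 beta_s s_S S_N k_ge0 N_ge0 Q_le ind_ge move1 move3 a_big.
have e1 : (a - 1) ^+ 2 + 3 * (a - 1) = a ^+ 2 + a - 2 by ring.
have e3 : (a - 3) ^+ 2 + 3 * (a - 3) = a ^+ 2 - 3 * a by ring.
rewrite e1 in move1; rewrite e3 in move3.
have S_le : S <= 3 * a - 1 by lia.
have s_le : s <= a by lia.
set T := S - s in Q_le.
have key : a ^+ 2 - s ^+ 2 + a + s - 1 - 2 * k + 2 * beta * s <= T * (1 + beta).
  by rewrite /T in Q_le *; lia.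
have [s_lt|s_eq] := ltrP s a.
  exfalso.
  have T_le : T * (1 + beta) <= (3 * a - 1 - s) * (1 + beta).
    by apply: ler_wpM2r; rewrite /T; lia.
  have prod_ge : a - 2 <= (a - s) * (a + s - 2 - 3 * beta).
    rewrite -[X in X <= _]mul1r; apply: ler_pM; lia.
  have gap : a ^+ 2 - s ^+ 2 + a + s - 1 - 2 * k + 2 * beta * s - (3 * a - 1 - s) * (1 + beta)
          = (a - s) * (a + s - 2 - 3 * beta) + beta - 2 * k by ring.
  lia.
have s_eq_a : s = a by lia.
rewrite s_eq_a in key.
have T_le : T <= 2 * a - 1 by rewrite /T; lia.
have beta_le : beta <= 2 * k.
  have : T * beta <= (2 * a - 1) * beta by apply: ler_wpM2r.
  have : T * (1 + beta) = T + T * beta by ring.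
  lia.
have T_le_kN : T <= 2 * k * N.
  apply: le_trans (_ : N * beta <= _); first by rewrite /T; lia.
  by rewrite mulrC ler_wpM2r.
have : 2 * a - T <= 2 * k + 1.
  have : (2 * a - T) * (1 + beta) <= 2 * k + 1.
    have -> : (2 * a - T) * (1 + beta) = 2 * a + 2 * beta * a - T * (1 + beta) by ring.
    lia.
  have [|_] := lerP (2 * a - T) 0; first lia.
  by apply: le_trans; apply: ler_peMr; lia.
lia.
Qed.

Lemma sum_top3_tail n (b : 'I_n -> int) :
  \sum_i b i = top3 b + \sum_(i < n | ~~ (i < 3)%N) b i.
Proof. exact: (bigID (fun i : 'I_n => (i < 3)%N)). Qed.

Lemma tail_le_third n (b : 'I_n -> int) :
  (forall i, 0 <= b i) -> (forall i j : 'I_n, (i <= j)%N -> b j <= b i) ->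
  \sum_(i < n | ~~ (i < 3)%N) b i <= n%:Z * third b.
Proof.
move=> b_ge0 b_anti; apply: (@le_trans _ _ (\sum_(i < n) third b)).
  rewrite big_mkcond /=; apply: ler_sum => i _.
  case: ifP => [|_]; last exact: third_ge0.
  by rewrite -leqNgt => /ltnW; apply: le_third.
by rewrite sumr_const card_ord -mulr_natl natz.
Qed.

Lemma minimal_classHE_move (R : realType) n k (A : H2 n) d (P : pred 'I_n) :
  minimal_U5 R k A -> cone_nonneg R (classHE d P) -> 0 < d < A.1 ->
  (A.1 - d) ^+ 2 + 3 * (A.1 - d) - \sum_i phi (A.2 i) + 2 * \sum_(i | P i) A.2 i
    < (2 * k)%:Z.
Proof.
move=> Amin D_nn /andP[d_gt0 d_lt]; rewrite -ind_subc_classHE.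
apply: (minimal_descent Amin) => //.
by move/(congr1 fst) => /= /eqP; rewrite subr_eq addrC -subr_eq subrr eq_sym gt_eqF.
Qed.

Lemma minimal_a_bound (R : realType) n k (A : H2 n) :
  minimal_U5 R k A -> A.1 <= k%:Z * n%:Z + 2 * k%:Z + 4.
Proof.
move=> Amin; have [a_small|a_big] := lerP A.1 (2 * k%:Z + 4).
  by have : 0 <= k%:Z * n%:Z; lia.
have b_ge0 := minimal_coef_ge0 Amin; have b_anti := minimal_coef_sorted Amin.
have phiE : \sum_i phi (A.2 i) = \sum_i A.2 i ^+ 2 + \sum_i A.2 i by rewrite big_split.
have ind_A := Amin.1.1; rewrite ind_phi phiE in ind_A.
have move1 : (A.1 - 1) ^+ 2 + 3 * (A.1 - 1) - \sum_i phi (A.2 i) + 2 * top3 A.2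
             < (2 * k)%:Z.
  apply: (minimal_classHE_move (P := fun i : 'I_n => (i < 3)%N) Amin); last lia.
  by move=> x0 x /cone_shape[_ _ top]; rewrite pairing_classHE subr_ge0 mulr1.
have move3 : (A.1 - 3) ^+ 2 + 3 * (A.1 - 3) - \sum_i phi (A.2 i) + 2 * \sum_i A.2 i
             < (2 * k)%:Z.
  apply: (minimal_classHE_move (P := predT) Amin); last lia.
  by move=> x0 x /cone_c1; rewrite pairing_classHE subr_ge0.
rewrite phiE in move1 move3.
suff : A.1 <= k%:Z * n%:Z + k%:Z by lia.
apply: (@bound_from_moves _ (top3 A.2) (\sum_i A.2 i) (\sum_i A.2 i ^+ 2) (third A.2));
  rewrite ?(top3_bounds b_ge0 b_anti).1 ?squares_bound //; try lia.
- exact: third_ge0.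
- by rewrite sum_top3_tail lerDl sumr_ge0.
- by rewrite sum_top3_tail lerD2l tail_le_third.
Qed.

Lemma phi_bound (a b : int) : 0 <= a -> 0 <= b -> phi b <= a ^+ 2 + 3 * a -> b <= a + 1.
Proof.
move=> a_ge0 b_ge0 phi_le; rewrite leNgt; apply/negP => b_big.
have : (a + 2) * (a + 2) <= b * b by apply: ler_pM; lia.
by move: phi_le; rewrite /phi !expr2; lia.
Qed.

Lemma minimal_coef_bound (R : realType) n k (A : H2 n) :
  minimal_U5 R k A -> forall i, 0 <= A.2 i <= A.1 + 1.
Proof.
move=> Amin i; have b_ge0 := minimal_coef_ge0 Amin; rewrite b_ge0 /=.
apply: phi_bound => //; first exact: ltW (minimal_a_gt0 Amin).
have := Amin.1.1; rewrite ind_phi (bigD1 i) //=; set rest := \sum_(_ < n | _) _.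
have : 0 <= rest by apply: sumr_ge0 => j _; rewrite /phi addr_ge0 ?sqr_ge0.
lia.
Qed.

Lemma finite_box n (N : nat) : exists s : seq (H2 n), forall A : H2 n,
  0 <= A.1 < N%:Z -> (forall i, 0 <= A.2 i < N%:Z) -> A \in s.
Proof.
pose F (p : 'I_N * {ffun 'I_n -> 'I_N}) : H2 n :=
  ((p.1 : nat)%:Z, [ffun i => (p.2 i : nat)%:Z]).
exists (codom F) => -[a b] /= a_box b_box.
have a_lt : (absz a < N)%N by lia.
have b_lt i : (absz (b i) < N)%N by have := b_box i; lia.
rewrite (_ : (a, b) = F (Ordinal a_lt, [ffun i => Ordinal (b_lt i)])) ?codom_f //.
rewrite /F /=; congr pair; first by lia.
by apply/ffunP => i; rewrite !ffunE /=; have := b_box i; lia.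
Qed.

Theorem proposition4p6 (R : realType) (n k : nat) :
  (1 <= n)%N -> (1 <= k)%N ->
  exists s : seq (H2 n), forall A : H2 n, minimal_U5 R k A -> A \in s.
Proof.
move=> _ _; have [s s_box] := finite_box n (absz (k%:Z * n%:Z + 2 * k%:Z + 4) + 2).
exists s => A Amin; have a_pos := minimal_a_gt0 Amin.
have a_le := minimal_a_bound Amin; have b_le := minimal_coef_bound Amin.
apply: s_box => [|i]; first lia.
by have := b_le i; lia.
Qed.
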